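(* Let $0<q<1$. Define the $q$-Bernoulli numbers $b_{n,q}$ and $q$-Bernoulli polynomials $B_{n,q}(x)$ by \[ \frac{t}{e_q(t)-1}=\sum_{n=0}^\infty b_{n,q}\frac{t^n}{[n]_q!},\qquad \frac{t}{e_q(t)-1}e_q(tx)=\sum_{n=0}^\infty B_{n,q}(x)\frac{t^n}{[n]_q!} \] (for $t$ in a neighborhood of $0$). Then for every integer $n\ge1$, \[ B_{n,q}(qx)=q^n\left(x-\frac{1}{q[2]_q}\right)B_{n-1,q}(x)-\frac{1}{[n]_q}\sum_{k=0}^{n-2}\begin{bmatrix}n\\k\end{bmatrix}_q q^{k-1}b_{n-k,q}B_{k,q}(x). \]
   Context: $[n]_q=\frac{1-q^n}{1-q}$, $[0]_q!=1$, $[n]_q!=[n]_q\cdots[1]_q$, $\begin{bmatrix}n\\k\end{bmatrix}_q=\frac{[n]_q!}{[k]_q![n-k]_q!}$, and $e_q(t)=\sum_{n\ge0}\frac{t^n}{[n]_q!}$. *)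

From Stdlib Require Import Reals.
From Coquelicot Require Import Coquelicot.
Open Scope R_scope.

Definition qint (q : R) (n : nat) : R := (1 - q ^ n) / (1 - q).

Fixpoint qfact (q : R) (n : nat) : R :=
  match n with
  | O => 1
  | S m => qint q (S m) * qfact q m
  end.

Definition qbinom (q : R) (n k : nat) : R :=
  qfact q n / (qfact q k * qfact q (n - k)).

Definition eq_exp (q t : R) : R := Series (fun n => t ^ n / qfact q n).

(* sumR f m = f 0 + ... + f (m-1)  (empty sum = 0 when m = 0) *)
Fixpoint sumR (f : nat -> R) (m : nat) : R :=
  match m with
  | O => 0
  | S m' => sumR f m' + f m'
  end.

From Stdlib Require Import Reals Lra Lia.
From Coquelicot Require Import Coquelicot.
Open Scope R_scope.

(* Write beta(t) = t / (e_q(t) - 1) and F(t, x) = beta(t) e_q(t x).  The q-difference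
   equation e_q(q s) = (1 - (1 - q) s) e_q(s) gives
     q beta(t) = beta(q t) (1 - (1 - q) t - (1 - q) beta(t)),
   hence the functional equation
     F(t, q x) - F(q t, q x) = (1 - q) F(q t, x) (q x t + (1 - t - beta(t)) / q).
   A power series is determined by its sum on a right neighbourhood of 0, so the
   coefficients of t^n on both sides agree; with b_0 = 1 and b_1 = -1/[2]_q, read off
   from beta(t) (e_q(t) - 1) / t = 1, this is the recurrence. *)

Definition pseries_on (a : nat -> R) (f : R -> R) (d : R) : Prop :=
  forall t, 0 < t < d -> is_pseries a t (f t).

Definition PS_one : nat -> R := fun n => match n with O => 1 | S _ => 0 end.

Lemma is_pseries_one (t : R) : is_pseries PS_one t 1.
Proof.
  apply is_pseries_R, is_series_decr_1.
  apply (is_series_ext (fun _ => 0)).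
  - intros n; simpl; ring.
  - match goal with |- is_series _ ?l => replace l with 0 end.
    + exact (is_series_ext _ _ _ (fun n => scal_zero_r _)
             (@is_pseries_0 R_AbsRing R_NormedModule (fun _ => 0))).
    + unfold plus, opp; simpl; ring.
Qed.

Lemma is_pseries_le_CV_radius (a : nat -> R) (r l : R) :
  is_pseries a r l -> Rbar_le r (CV_radius a).
Proof.
  intros Hl; apply (proj1 (CV_radius_bounded a)).
  apply is_pseries_R in Hl.
  apply (fun H => ex_series_lim_0 _ (ex_intro _ l H)), is_lim_seq_Reals in Hl.
  destruct (maj_by_pos (fun n => a n * r ^ n)) as [M [_ HM]]; [now exists 0|].
  now exists M.
Qed.

Lemma continuity_pt_eq0_right (f : R -> R) (d : R) : 0 < d -> continuity_pt f 0 ->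
  (forall t, 0 < t < d -> f t = 0) -> f 0 = 0.
Proof.
  intros Hd Hc Hf.
  apply continuity_pt_filterlim in Hc.
  assert (Hf0 : filterlim f (at_right 0) (locally 0)).
  { apply (filterlim_ext_loc (fun _ => 0)); [|apply filterlim_const].
    exists (mkposreal d Hd); intros t Ht Htpos.
    apply sym_eq, Hf; split; [exact Htpos|].
    apply Rabs_lt_between' in Ht; simpl in Ht; lra. }
  exact (filterlim_locally_unique (F := at_right 0) f _ _
           (filterlim_filter_le_1 (F := locally 0) _ (filter_le_within _) Hc) Hf0).
Qed.

Lemma pseries_on_CV_radius (a : nat -> R) (f : R -> R) (d t : R) :
  pseries_on a f d -> 0 < t < d -> Rbar_lt (Rabs t) (CV_radius a).
Proof.
  intros Ha Ht; rewrite Rabs_pos_eq by lra.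
  apply Rbar_lt_le_trans with ((t + d) / 2); [simpl; lra|].
  apply (is_pseries_le_CV_radius _ _ _ (Ha ((t + d) / 2) ltac:(lra))).
Qed.

Section PseriesOn.

Variables (d : R) (f g : R -> R) (a c : nat -> R).
Hypotheses (Ha : pseries_on a f d) (Hc : pseries_on c g d).

Lemma pseries_on_le (d' : R) : d' <= d -> pseries_on a f d'.
Proof. intros Hd t Ht; apply Ha; lra. Qed.

Lemma pseries_on_plus : pseries_on (PS_plus a c) (fun t => f t + g t) d.
Proof. intros t Ht; exact (is_pseries_plus _ _ _ _ _ (Ha t Ht) (Hc t Ht)). Qed.

Lemma pseries_on_minus : pseries_on (PS_minus a c) (fun t => f t - g t) d.
Proof. intros t Ht; exact (is_pseries_minus _ _ _ _ _ (Ha t Ht) (Hc t Ht)). Qed.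

Lemma pseries_on_scal (k : R) : pseries_on (PS_scal k a) (fun t => k * f t) d.
Proof. intros t Ht; exact (is_pseries_scal k _ _ _ (Rmult_comm _ _) (Ha t Ht)). Qed.

Lemma pseries_on_incr_1 : pseries_on (PS_incr_1 a) (fun t => t * f t) d.
Proof. intros t Ht; exact (is_pseries_incr_1 _ _ _ (Ha t Ht)). Qed.

Lemma pseries_on_decr_1 : pseries_on (PS_decr_1 a) (fun t => / t * (f t - a O)) d.
Proof.
  intros t Ht.
  exact (is_pseries_decr_1 a t (/ t) (f t) (Rinv_l t ltac:(lra)) (Ha t Ht)).
Qed.

Lemma pseries_on_mult : pseries_on (PS_mult a c) (fun t => f t * g t) d.
Proof.
  intros t Ht; apply (is_pseries_mult _ _ _ _ _ (Ha t Ht) (Hc t Ht));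
    [exact (pseries_on_CV_radius _ _ _ _ Ha Ht)|exact (pseries_on_CV_radius _ _ _ _ Hc Ht)].
Qed.

Lemma pseries_on_dilate (k : R) : 0 < k <= 1 ->
  pseries_on (fun n => k ^ n * a n) (fun t => f (k * t)) d.
Proof.
  intros Hk t Ht; apply is_pseries_R.
  apply (is_series_ext (fun n => a n * (k * t) ^ n)).
  - intros n; rewrite Rpow_mult_distr, <- Rmult_assoc, (Rmult_comm (a n)); reflexivity.
  - apply is_pseries_R, Ha; nra.
Qed.

End PseriesOn.

Lemma pseries_on_coef_eq0 (a : nat -> R) (d : R) : 0 < d ->
  pseries_on a (fun _ => 0) d -> forall n, a n = 0.
Proof.
  intros Hd Ha n.
  induction n as [n IH] using (well_founded_induction Wf_nat.lt_wf).
  (* Given the lower coefficients vanish, the tail series PS_decr_n a n vanishes on (0, d);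
     by continuity so does its value a n at 0. *)
  assert (Htail : pseries_on (PS_decr_n a n) (fun _ => 0) d).
  { intros t Ht.
    assert (Hex : ex_pseries (PS_decr_n a n) t).
    { apply ex_pseries_decr_n; [right; exists (/ t); apply Rinv_l; lra|].
      exists 0; exact (Ha t Ht). }
    assert (E := is_pseries_unique _ _ _ (Ha t Ht)).
    rewrite (PSeries_decr_n_aux a n t IH) in E.
    apply Rmult_integral in E; destruct E as [E | E].
    - exfalso; apply (pow_nonzero t n); lra.
    - rewrite <- E; exact (PSeries_correct _ _ Hex). }
  assert (Hcont : continuity_pt (PSeries (PS_decr_n a n)) 0).
  { apply PSeries_continuity.
    rewrite Rabs_R0; apply Rbar_le_lt_trans with (Rabs (d / 2)); [apply Rabs_pos|].
    apply (pseries_on_CV_radius _ _ _ _ Htail); lra. }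
  rewrite <- (Nat.add_0_r n); change (a (n + 0)%nat) with (PS_decr_n a n 0).
  rewrite <- PSeries_0.
  apply (continuity_pt_eq0_right _ d Hd Hcont).
  intros t Ht; exact (is_pseries_unique _ _ _ (Htail t Ht)).
Qed.

Lemma pseries_on_coef_unique (a c : nat -> R) (f g : R -> R) (d : R) : 0 < d ->
  pseries_on a f d -> pseries_on c g d -> (forall t, 0 < t < d -> f t = g t) ->
  forall n, a n = c n.
Proof.
  intros Hd Ha Hc Hfg n.
  apply Rminus_diag_uniq.
  apply (pseries_on_coef_eq0 (PS_minus a c) d Hd).
  intros t Ht; rewrite <- (Rminus_diag_eq _ _ (Hfg t Ht)).
  exact (pseries_on_minus _ _ _ _ _ Ha Hc t Ht).
Qed.

Section QExponential.

Variable q : R.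
Hypothesis hq : 0 < q < 1.

Lemma qint_1 : qint q 1 = 1.
Proof. unfold qint; field; lra. Qed.

Lemma qint_2 : qint q 2 = 1 + q.
Proof. unfold qint; field; lra. Qed.

Lemma qint_ge1 (n : nat) : (1 <= n)%nat -> 1 <= qint q n.
Proof.
  intros Hn; destruct n as [|n]; [lia|].
  assert (Hqn : q ^ n <= 1).
  { destruct n as [|n]; [simpl; lra|].
    apply Rlt_le, pow_lt_1_compat; [lra|lia]. }
  unfold qint; apply (Rmult_le_reg_r (1 - q)); [lra|].
  unfold Rdiv; rewrite Rmult_assoc, Rinv_l, Rmult_1_r by lra.
  simpl; nra.
Qed.

Lemma qfact_ge1 (n : nat) : 1 <= qfact q n.
Proof.
  induction n as [|n IH]; simpl; [lra|].
  assert (1 <= qint q (S n)) by (apply qint_ge1; lia).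
  nra.
Qed.

Lemma qfact_neq0 (n : nat) : qfact q n <> 0.
Proof. assert (H := qfact_ge1 n); lra. Qed.

Lemma eq_exp_pseries (t : R) : Rabs t < 1 ->
  is_pseries (fun n => / qfact q n) t (eq_exp q t).
Proof.
  intros Ht; apply is_pseries_R.
  apply (is_series_ext (fun n => t ^ n / qfact q n));
    [intros n; simpl; unfold Rdiv; ring|].
  apply Series_correct.
  (* [n]_q! >= 1, so the series is dominated by the geometric series in |t| *)
  apply (@ex_series_le R_AbsRing R_CompleteNormedModule _ (fun n => Rabs t ^ n)).
  - intros n; change (Rabs (t ^ n / qfact q n) <= Rabs t ^ n).
    assert (Hf := qfact_ge1 n).
    assert (Hinv : 0 < / qfact q n <= 1).
    { split; [apply Rinv_0_lt_compat; lra|].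
      rewrite <- Rinv_1; apply Rinv_le_contravar; lra. }
    assert (0 <= Rabs (t ^ n)) by apply Rabs_pos.
    unfold Rdiv; rewrite Rabs_mult, RPow_abs, (Rabs_pos_eq (/ qfact q n)) by lra.
    nra.
  - apply ex_series_geom; rewrite Rabs_Rabsolu; exact Ht.
Qed.

Lemma eq_exp_qshift (s : R) : Rabs s < 1 ->
  eq_exp q (q * s) = (1 - (1 - q) * s) * eq_exp q s.
Proof.
  intros Hs.
  assert (Hqs : Rabs (q * s) < 1).
  { rewrite Rabs_mult, (Rabs_pos_eq q) by lra.
    assert (0 <= Rabs s) by apply Rabs_pos; nra. }
  assert (H1 := eq_exp_pseries (q * s) Hqs).
  assert (H2 := eq_exp_pseries s Hs).
  assert (H3 := is_pseries_minus _ _ _ _ _ H2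
                  (is_pseries_scal (1 - q) _ _ _ (Rmult_comm _ _) (is_pseries_incr_1 _ _ _ H2))).
  apply is_pseries_R in H1; apply is_pseries_R in H3.
  apply (is_series_ext _ (fun n => / qfact q n * (q * s) ^ n)) in H3.
  - rewrite (eq_trans (eq_sym (is_series_unique _ _ H1)) (is_series_unique _ _ H3)).
    simpl; unfold plus, opp, scal, mult; simpl; unfold mult; simpl; ring.
  (* coefficientwise, q^(n+1)/[n+1]! = 1/[n+1]! - (1 - q)/[n]! as (1 - q) [n+1] = 1 - q^(n+1) *)
  - intros [|n]; unfold PS_minus, PS_plus, PS_opp, PS_scal, PS_incr_1; simpl;
      unfold plus, opp, scal, mult, zero; simpl; unfold mult; simpl.
    + rewrite Rinv_1; ring.
    + assert (q ^ S n < 1) by (apply pow_lt_1_compat; [lra|lia]).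
      assert (Hf := qfact_neq0 n).
      rewrite Rpow_mult_distr; unfold qint; simpl; field; simpl in *; repeat split; lra.
Qed.

Lemma eq_exp_ge (t : R) : 0 <= t < 1 -> 1 + t <= eq_exp q t.
Proof.
  intros Ht.
  assert (H := eq_exp_pseries t ltac:(rewrite Rabs_pos_eq; lra)).
  apply is_pseries_R in H.
  (* the partial sums are nondecreasing and the second one is 1 + t *)
  assert (Hterm : forall n, 0 <= / qfact q n * t ^ n).
  { intros n; apply Rmult_le_pos; [|apply pow_le; lra].
    apply Rlt_le, Rinv_0_lt_compat; assert (Hf := qfact_ge1 n); lra. }
  apply Rle_trans with (sum_n (fun n => / qfact q n * t ^ n) 1).
  - rewrite sum_Sn, sum_O; simpl; unfold plus; simpl.
    rewrite qint_1, !Rmult_1_l, Rmult_1_r, Rinv_1; lra.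
  - apply (is_lim_seq_incr_compare _ _ H).
    intros n; rewrite sum_Sn; unfold plus; simpl.
    assert (Hn := Hterm (S n)); simpl in Hn; lra.
Qed.

End QExponential.

Lemma sumR_ext (f g : nat -> R) (m : nat) :
  (forall k, f k = g k) -> sumR f m = sumR g m.
Proof. intros H; induction m as [|m IH]; simpl; [reflexivity|now rewrite IH, H]. Qed.

Lemma sumR_scal (c : R) (f : nat -> R) (m : nat) :
  sumR (fun k => c * f k) m = c * sumR f m.
Proof. induction m as [|m IH]; simpl; [ring|rewrite IH; ring]. Qed.

Lemma sum_f_R0_sumR (f : nat -> R) (n : nat) : sum_f_R0 f n = sumR f (S n).
Proof. induction n as [|n IH]; simpl; [ring|now rewrite IH]. Qed.

Lemma pseries_on_of_series (c w : nat -> R) (f : R -> R) (d eps : R) : d <= eps ->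
  (forall t, 0 < Rabs t < eps -> is_series (fun n => c n * t ^ n / w n) (f t)) ->
  pseries_on (fun n => c n / w n) f d.
Proof.
  intros Hd H t Ht; apply is_pseries_R.
  apply (is_series_ext (fun n => c n * t ^ n / w n)); [intros n; simpl; unfold Rdiv; ring|].
  apply H; rewrite Rabs_pos_eq; lra.
Qed.

Definition qbernoulli_gf (q t : R) : R := t / (eq_exp q t - 1).

Definition qbernoulli_poly_gf (q x t : R) : R := qbernoulli_gf q t * eq_exp q (t * x).

Section QBernoulli.

Variable q : R.
Hypothesis hq : 0 < q < 1.

Lemma qbernoulli_gf_qshift (t : R) : 0 < t < 1 ->
  q * qbernoulli_gf q t
  = qbernoulli_gf q (q * t) * (1 - (1 - q) * t - (1 - q) * qbernoulli_gf q t).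
Proof.
  intros Ht; unfold qbernoulli_gf.
  assert (He := eq_exp_ge q hq t ltac:(lra)).
  assert (Heq := eq_exp_ge q hq (q * t) ltac:(nra)).
  rewrite (eq_exp_qshift q hq t) in * by (rewrite Rabs_pos_eq; lra).
  field; nra.
Qed.

Lemma qbernoulli_poly_gf_qdiff (x t : R) : 0 < t < 1 -> Rabs (q * t * x) < 1 ->
  let F := qbernoulli_poly_gf q x (q * t) in
  qbernoulli_poly_gf q (q * x) t - qbernoulli_poly_gf q (q * x) (q * t)
  = (1 - q) * (q * x * (t * F) - / q * (F * qbernoulli_gf q t + t * F - F)).
Proof.
  intros Ht Hx F; unfold F, qbernoulli_poly_gf.
  replace (q * t * (q * x)) with (q * (q * t * x)) by ring.
  replace (t * (q * x)) with (q * t * x) by ring.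
  rewrite (eq_exp_qshift q hq _ Hx).
  assert (Hshift := qbernoulli_gf_qshift t Ht).
  apply (Rmult_eq_reg_l q); [|lra].
  apply Rminus_diag_uniq.
  transitivity (eq_exp q (q * t * x) * (q * qbernoulli_gf q t
    - qbernoulli_gf q (q * t) * (1 - (1 - q) * t - (1 - q) * qbernoulli_gf q t)));
    [field; lra|].
  rewrite Hshift; ring.
Qed.

Lemma qbernoulli_coef_01 (beta : nat -> R) (d : R) : 0 < d ->
  pseries_on beta (qbernoulli_gf q) d -> beta 0%nat = 1 /\ beta 1%nat = - / qint q 2.
Proof.
  intros Hd Hb.
  set (d' := Rmin d 1).
  assert (Hd' : 0 < d' <= 1) by (unfold d'; split; [apply Rmin_glb_lt; lra|apply Rmin_r]).
  assert (He : pseries_on (fun n => / qfact q n) (eq_exp q) d').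
  { intros t Ht; apply eq_exp_pseries; [exact hq|rewrite Rabs_pos_eq; lra]. }
  (* t / (e_q(t) - 1) times (e_q(t) - 1) / t is the constant 1 *)
  assert (H01 : forall n, PS_mult beta (PS_decr_1 (fun n => / qfact q n)) n = PS_one n).
  { apply (pseries_on_coef_unique _ _ _ (fun _ => 1) d' (proj1 Hd')
      (pseries_on_mult _ _ _ _ _ (pseries_on_le _ _ _ Hb d' (Rmin_l _ _))
         (pseries_on_decr_1 _ _ _ He))
      (fun t _ => is_pseries_one t)).
    intros t Ht; cbv beta; unfold qbernoulli_gf; simpl qfact.
    assert (He1 := eq_exp_ge q hq t ltac:(lra)).
    rewrite Rinv_1; field; lra. }
  assert (H0 := H01 0%nat); assert (H1 := H01 1%nat).
  unfold PS_mult, PS_decr_1, PS_one in H0, H1; simpl in H0, H1.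
  rewrite qint_1 in H0, H1 by exact hq.
  rewrite Rmult_1_r, Rinv_1, Rmult_1_r in H0, H1.
  split; [exact H0|].
  rewrite H0 in H1; lra.
Qed.

Lemma qbernoulli_poly_coef_recurrence (x d : R) (beta g h : nat -> R) : 0 < d ->
  pseries_on beta (qbernoulli_gf q) d ->
  pseries_on g (qbernoulli_poly_gf q x) d ->
  pseries_on h (qbernoulli_poly_gf q (q * x)) d ->
  forall m, qint q (S m) * h (S m)
    = q ^ S m * (x - 1 / (q * qint q 2)) * g m
      - / q * sumR (fun k => q ^ k * g k * beta (S m - k)%nat) m.
Proof.
  intros Hd Hb Hg Hh m.
  destruct (qbernoulli_coef_01 beta d Hd Hb) as [Hb0 Hb1].
  set (d' := Rmin d (/ (Rabs x + 1))).
  assert (Hax := Rabs_pos x).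
  assert (Hdd : d' <= d) by apply Rmin_l.
  assert (Hd'x : d' <= / (Rabs x + 1)) by apply Rmin_r.
  assert (Hd' : 0 < d') by (apply Rmin_glb_lt; [|apply Rinv_0_lt_compat]; lra).
  assert (Hsmall : forall t, 0 < t < d' -> 0 < t < 1 /\ Rabs (q * t * x) < 1).
  { intros t Ht.
    assert (t * (Rabs x + 1) < 1).
    { apply Rlt_le_trans with (d' * (Rabs x + 1)); [nra|].
      rewrite <- (Rinv_l (Rabs x + 1)) at 2 by lra.
      apply Rmult_le_compat_r; lra. }
    split; [nra|].
    rewrite !Rabs_mult, !Rabs_pos_eq by lra; nra. }
  assert (Hb' := pseries_on_le _ _ _ Hb d' Hdd).
  assert (Hg' := pseries_on_le _ _ _ Hg d' Hdd).
  assert (Hh' := pseries_on_le _ _ _ Hh d' Hdd).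
  assert (Hqg := pseries_on_dilate _ _ _ Hg' q ltac:(lra)).
  assert (Hqh := pseries_on_dilate _ _ _ Hh' q ltac:(lra)).
  assert (Hcoef := pseries_on_coef_unique _ _ _ _ d' Hd'
    (pseries_on_minus _ _ _ _ _ Hh' Hqh)
    (pseries_on_scal _ _ _ (pseries_on_minus _ _ _ _ _
       (pseries_on_scal _ _ _ (pseries_on_incr_1 _ _ _ Hqg) (q * x))
       (pseries_on_scal _ _ _ (pseries_on_minus _ _ _ _ _
          (pseries_on_plus _ _ _ _ _ (pseries_on_mult _ _ _ _ _ Hqg Hb')
             (pseries_on_incr_1 _ _ _ Hqg)) Hqg) (/ q))) (1 - q))
    ltac:(intros t Ht; destruct (Hsmall t Ht); now apply qbernoulli_poly_gf_qdiff) (S m)).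
  set (Ssum := sumR (fun k => q ^ k * g k * beta (S m - k)%nat) m).
  unfold PS_minus, PS_plus, PS_opp, PS_scal, PS_incr_1, PS_mult in Hcoef.
  rewrite sum_f_R0_sumR in Hcoef; cbn [sumR] in Hcoef.
  change (sumR _ m) with Ssum in Hcoef.
  replace (S m - m)%nat with 1%nat in Hcoef by lia.
  rewrite Nat.sub_diag, Hb0, Hb1 in Hcoef.
  simpl in Hcoef; unfold plus, opp, scal, mult in Hcoef; simpl in Hcoef; unfold mult in Hcoef.
  assert (Hq2 := qint_2 q hq).
  apply (Rmult_eq_reg_l (1 - q)); [|lra].
  transitivity (h (S m) + - (q * q ^ m * h (S m))); [unfold qint; simpl; field; lra|].
  rewrite Hcoef, Hq2; simpl; field; lra.
Qed.

End QBernoulli.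

Theorem theorem3 (q : R) (hq0 : 0 < q) (hq1 : q < 1)
  (b : nat -> R) (B : nat -> R -> R)
  (hb : exists eps : R, 0 < eps /\
        forall t : R, 0 < Rabs t < eps ->
          is_series (fun n => b n * t ^ n / qfact q n)
                    (t / (eq_exp q t - 1)))
  (hB : forall x : R, exists eps : R, 0 < eps /\
        forall t : R, 0 < Rabs t < eps ->
          is_series (fun n => B n x * t ^ n / qfact q n)
                    (t / (eq_exp q t - 1) * eq_exp q (t * x))) :
  forall (n : nat) (x : R), (1 <= n)%nat ->
    B n (q * x) =
      q ^ n * (x - 1 / (q * qint q 2)) * B (n - 1)%nat x
      - 1 / qint q n *
        sumR (fun k => qbinom q n k * (q ^ k / q) * b (n - k)%nat * B k x)
             (n - 1)%nat.
Proof.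
  intros n x Hn; destruct n as [|m]; [lia|].
  assert (hq : 0 < q < 1) by lra.
  destruct hb as [e1 [He1 Hb]].
  destruct (hB x) as [e2 [He2 Hx]].
  destruct (hB (q * x)) as [e3 [He3 Hqx]].
  set (d := Rmin e1 (Rmin e2 e3)).
  assert (Hd : 0 < d) by (apply Rmin_glb_lt; [|apply Rmin_glb_lt]; lra).
  assert (Hrec := qbernoulli_poly_coef_recurrence q hq x d _ _ _ Hd
    (pseries_on_of_series _ _ _ d e1 (Rmin_l _ _) Hb)
    (pseries_on_of_series _ _ _ d e2 (Rle_trans _ _ _ (Rmin_r _ _) (Rmin_l _ _)) Hx)
    (pseries_on_of_series _ _ _ d e3 (Rle_trans _ _ _ (Rmin_r _ _) (Rmin_r _ _)) Hqx) m).
  cbv beta in Hrec.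
  replace (S m - 1)%nat with m by lia.
  assert (Hf := qfact_neq0 q hq).
  assert (Hqint : forall k, (1 <= k)%nat -> qint q k <> 0)
    by (intros k Hk; assert (H := qint_ge1 q hq k Hk); lra).
  rewrite <- (sumR_ext (fun k => qfact q (S m) / q *
      (q ^ k * (B k x / qfact q k) * (b (S m - k)%nat / qfact q (S m - k)))))
    by (intros k; unfold qbinom; field; repeat split; (apply Hf || lra)).
  rewrite sumR_scal.
  simpl qfact in *.
  transitivity (qfact q m * (qint q (S m) * (B (S m) (q * x) / (qint q (S m) * qfact q m))));
    [field; split; [apply Hf|apply Hqint; lia]|].
  rewrite Hrec; field; repeat split; (apply Hf || (apply Hqint; lia) || lra).
Qed.
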